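(* Let $\alpha\in(0,1)$ be irrational. Then for every integer $n\ge 1$, $$P_\alpha(n)=\#\bigl\{k\in\{1,\dots,n\}:\ k\alpha-\lfloor k\alpha\rfloor\le n\alpha-\lfloor n\alpha\rfloor\bigr\}.$$
   Context: A Sturmian sequence is an aperiodic (not eventually periodic) $1$-balanced sequence over a two-letter alphabet; here a sequence is $1$-balanced if for any two factors $u,v$ of equal length and each letter $x$, $\bigl||u|_x-|v|_x\bigr|\le 1$. For a finite word $w$ over $\{a,b\}$, its Parikh vector is $\Psi(w)=(|w|_a,|w|_b)^T$. For irrational $\alpha\in(0,1)$, let $\mathbf{u}$ be a Sturmian sequence over $\{a,b\}$ in which the letter $b$ has frequency $\alpha$ (the set of factors of such a sequence depends only on $\alpha$). For $n\ge1$, define $P_\alpha(n)$ as the number of factors $u$ of $\mathbf{u}$ of length $n$ with $\Psi(u)=(\lfloor(1-\alpha)n\rfloor,\lceil n\alpha\rceil)^T$. *)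

(* concrete reals R. Letters: a = false, b = true. *)
From Stdlib Require Import Reals Lra Lia ZArith Arith List.
Open Scope R_scope.

(* floor and ceiling: up x is the unique integer with x < up x <= x + 1 *)
Definition Zfloor (x : R) : Z := (up x - 1)%Z.
Definition Zceil (x : R) : Z := (- Zfloor (- x))%Z.
Definition frac (x : R) : R := x - IZR (Zfloor x).

Definition irrational (x : R) : Prop :=
  ~ exists p q : Z, q <> 0%Z /\ x = IZR p / IZR q.

Definition word := nat -> bool.

Definition factor_at (u : word) (i n : nat) : list bool :=
  map (fun j => u (i + j)%nat) (seq 0 n).

Definition is_factor (u : word) (w : list bool) : Prop :=
  exists i, w = factor_at u i (length w).

Definition occ (x : bool) (w : list bool) : nat := count_occ Bool.bool_dec w x.

Definition balanced (u : word) : Prop :=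
  forall (x : bool) (v w : list bool), is_factor u v -> is_factor u w ->
    length v = length w ->
    (Z.abs (Z.of_nat (occ x v) - Z.of_nat (occ x w)) <= 1)%Z.

Definition eventually_periodic (u : word) : Prop :=
  exists p N : nat, (0 < p)%nat /\ forall k, (N <= k)%nat -> u (k + p)%nat = u k.

Definition sturmian (u : word) : Prop := balanced u /\ ~ eventually_periodic u.

Definition freq_b (u : word) (alpha : R) : Prop :=
  Un_cv (fun n => INR (occ true (factor_at u 0 (S n))) / INR (S n)) alpha.

Definition card_is (S : list bool -> Prop) (m : nat) : Prop :=
  exists l : list (list bool), NoDup l /\ (forall w, In w l <-> S w) /\ length l = m.

Definition P_set (u : word) (alpha : R) (n : nat) (w : list bool) : Prop :=
  is_factor u w /\ length w = n /\
  Z.of_nat (occ false w) = Zfloor ((1 - alpha) * INR n) /\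
  Z.of_nat (occ true w) = Zceil (INR n * alpha).

Definition rhs_count (alpha : R) (n : nat) : nat :=
  length (filter (fun k => if Rle_dec (frac (INR k * alpha)) (frac (INR n * alpha))
                           then true else false) (seq 1 n)).

(* A balanced word with letter frequency alpha has, in every factor of length k, either
   floor(k alpha) or floor(k alpha) + 1 letters b; call the factor heavy in the second case.
   The discrepancy d(i) = |u_0 ... u_(i-1)|_b - i alpha then stays in a window [G, G + 1], and
   the factor of length k at position i is heavy exactly when d(i) - G < {k alpha}.  So the set
   of heavy lengths k <= n at position i is a threshold set {k : {k alpha} >= {k0 alpha}}, every
   threshold is realised because d(i) - G = -G - i alpha mod 1 is dense, and the threshold set
   determines the factor.  The factors counted by P_alpha(n) are those for which n is heavy,
   i.e. whose threshold k0 satisfies {k0 alpha} <= {n alpha}. *)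

From Stdlib Require Import Reals ZArith Arith List Lra Lia Classical.
Open Scope R_scope.

Lemma Zfloor_spec x : IZR (Zfloor x) <= x < IZR (Zfloor x) + 1.
Proof.
  unfold Zfloor. destruct (archimed x) as [H1 H2].
  rewrite minus_IZR. lra.
Qed.

Lemma Zfloor_unique x z : IZR z <= x < IZR z + 1 -> Zfloor x = z.
Proof.
  intros [H1 H2]. destruct (Zfloor_spec x) as [H3 H4].
  assert (z < Zfloor x + 1)%Z by (apply lt_IZR; rewrite plus_IZR; lra).
  assert (Zfloor x < z + 1)%Z by (apply lt_IZR; rewrite plus_IZR; lra).
  lia.
Qed.

Lemma Zfloor_nonneg x : 0 <= x -> (0 <= Zfloor x)%Z.
Proof.
  intros H. assert (-1 < Zfloor x)%Z; [|lia].
  apply lt_IZR. pose proof (Zfloor_spec x). lra.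
Qed.

Lemma frac_range x : 0 <= frac x < 1.
Proof. unfold frac. pose proof (Zfloor_spec x). lra. Qed.

Lemma IZR_between_m1_1 (z : Z) : -1 < IZR z < 1 -> z = 0%Z.
Proof. intros [H1 H2]. apply lt_IZR in H1. apply lt_IZR in H2. lia. Qed.

Lemma nat_pigeonhole (f : nat -> nat) (N : nat) :
  (forall j, (f j < N)%nat) -> exists a b, (a < b <= N)%nat /\ f a = f b.
Proof.
  intros Hf. apply NNPP. intros Hno.
  assert (Hnd : NoDup (map f (seq 0 (S N)))).
  { apply NoDup_map_NoDup_ForallPairs; [|apply seq_NoDup].
    intros a b Ha Hb E. apply in_seq in Ha, Hb.
    destruct (Nat.lt_total a b) as [L|[L|L]]; trivial; exfalso; apply Hno.
    - exists a, b. split; [lia | exact E].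
    - exists b, a. split; [lia | symmetry; exact E]. }
  apply NoDup_incl_length with (l' := seq 0 N) in Hnd.
  - rewrite length_map, !length_seq in Hnd. lia.
  - intros x Hx. apply in_map_iff in Hx. destruct Hx as [j [<- _]].
    apply in_seq. split; [lia | apply Hf].
Qed.

Lemma shift_hits_interval c x y eta : 0 < eta < y - x ->
  exists (i : nat) (z : Z), x < c - INR i * eta + IZR z < y.
Proof.
  intros He.
  set (z := (- Zfloor (c - y))%Z).
  set (t := c + IZR z - y).
  assert (Ht : 0 <= t).
  { unfold t, z. rewrite opp_IZR. pose proof (Zfloor_spec (c - y)). lra. }
  set (q := Zfloor (t / eta)).
  assert (Hs : IZR q <= t / eta < IZR q + 1) by apply Zfloor_spec.
  assert (Hq : (0 <= q)%Z).
  { apply Zfloor_nonneg. unfold Rdiv. apply Rmult_le_pos; [lra|].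
    left. apply Rinv_0_lt_compat. lra. }
  assert (Heta : t / eta * eta = t) by (field; lra).
  exists (Z.to_nat (q + 1)), z.
  rewrite INR_IZR_INZ, Z2Nat.id by lia. rewrite plus_IZR.
  assert (IZR q * eta <= t < (IZR q + 1) * eta) by nra.
  unfold t in *. lra.
Qed.

Section Irrational.

Variable alpha : R.
Hypothesis Hirr : irrational alpha.

Definition kfloor (k : nat) : Z := Zfloor (INR k * alpha).
Definition kfrac (k : nat) : R := frac (INR k * alpha).

Lemma kfloor_add_kfrac k : INR k * alpha = IZR (kfloor k) + kfrac k.
Proof. unfold kfrac, frac, kfloor. lra. Qed.

Lemma kfrac_range k : 0 <= kfrac k < 1.
Proof. apply frac_range. Qed.

Lemma mul_irrational_neq_IZR (m : nat) (z : Z) : (1 <= m)%nat -> INR m * alpha <> IZR z.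
Proof.
  intros Hm E. apply Hirr. exists z, (Z.of_nat m). split; [lia|].
  rewrite <- INR_IZR_INZ, <- E. field. apply not_0_INR. lia.
Qed.

Lemma mul_irrational_inj (a b : nat) (z : Z) :
  INR a * alpha - INR b * alpha = IZR z -> a = b.
Proof.
  intros E. destruct (Nat.lt_total a b) as [H|[H|H]]; trivial; exfalso.
  - apply (mul_irrational_neq_IZR (b - a) (- z)); [lia|].
    rewrite minus_INR, opp_IZR by lia. lra.
  - apply (mul_irrational_neq_IZR (a - b) z); [lia|].
    rewrite minus_INR by lia. lra.
Qed.

Lemma kfloor_strict k : (1 <= k)%nat ->
  IZR (kfloor k) < INR k * alpha < IZR (kfloor k) + 1.
Proof.
  intros Hk. destruct (Zfloor_spec (INR k * alpha)) as [[H|H] H'].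
  - unfold kfloor. lra.
  - exfalso. exact (mul_irrational_neq_IZR k _ Hk (eq_sym H)).
Qed.

Lemma kfrac_pos k : (1 <= k)%nat -> 0 < kfrac k.
Proof.
  intros Hk. pose proof (kfloor_strict k Hk). pose proof (kfloor_add_kfrac k). lra.
Qed.

Lemma kfrac_inj a b : kfrac a = kfrac b -> a = b.
Proof.
  intros E. apply (mul_irrational_inj a b (kfloor a - kfloor b)).
  rewrite minus_IZR, (kfloor_add_kfrac a), (kfloor_add_kfrac b). lra.
Qed.

Lemma Zceil_mul_irrational n : (1 <= n)%nat -> Zceil (INR n * alpha) = (kfloor n + 1)%Z.
Proof.
  intros Hn. pose proof (kfloor_strict n Hn). unfold Zceil.
  rewrite (Zfloor_unique (- (INR n * alpha)) (- kfloor n - 1)); [lia|].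
  rewrite minus_IZR, opp_IZR. lra.
Qed.

Lemma Zfloor_compl_mul_irrational n : (1 <= n)%nat ->
  Zfloor ((1 - alpha) * INR n) = (Z.of_nat n - kfloor n - 1)%Z.
Proof.
  intros Hn. pose proof (kfloor_strict n Hn). apply Zfloor_unique.
  rewrite !minus_IZR, <- INR_IZR_INZ. lra.
Qed.

(* Dirichlet: two of the N + 1 values kfrac 0, ..., kfrac N share a box of width 1/N. *)
Lemma kfrac_close_pair eps : 0 < eps ->
  exists a b, (a < b)%nat /\ Rabs (kfrac b - kfrac a) < eps.
Proof.
  intros He.
  destruct (INR_unbounded (/ eps)) as [N HN].
  assert (HN1 : (1 <= N)%nat).
  { destruct N; [|lia]. simpl in HN. pose proof (Rinv_0_lt_compat eps He). lra. }
  assert (HNpos : 0 < INR N) by (apply lt_0_INR; lia).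
  assert (HNe : 1 < INR N * eps).
  { apply (Rmult_lt_compat_r eps) in HN; [|lra]. rewrite Rinv_l in HN; lra. }
  set (box := fun j => Z.to_nat (Zfloor (INR N * kfrac j))).
  assert (Hbox : forall j, IZR (Z.of_nat (box j)) <= INR N * kfrac j < IZR (Z.of_nat (box j)) + 1).
  { intro j. unfold box. rewrite Z2Nat.id; [apply Zfloor_spec|].
    apply Zfloor_nonneg, Rmult_le_pos; [lra | apply kfrac_range]. }
  destruct (nat_pigeonhole box N) as [a [b [Hab E]]].
  { intro j. apply Nat2Z.inj_lt, lt_IZR. rewrite <- (INR_IZR_INZ N).
    pose proof (Hbox j). pose proof (kfrac_range j). nra. }
  exists a, b. split; [lia|].
  pose proof (Hbox a) as Ba. pose proof (Hbox b) as Bb. rewrite E in Ba.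
  assert (-1 < INR N * (kfrac b - kfrac a) < 1) by lra.
  apply Rabs_def1; nra.
Qed.

Lemma small_multiple eps : 0 < eps ->
  exists (m : nat) (z : Z) (eta : R), (1 <= m)%nat /\ 0 < eta < eps /\
    (INR m * alpha = IZR z + eta \/ INR m * alpha = IZR z - eta).
Proof.
  intros He. destruct (kfrac_close_pair eps He) as [a [b [Hab Hc]]].
  apply Rabs_def2 in Hc.
  assert (Hne : kfrac b <> kfrac a) by (intro X; apply kfrac_inj in X; lia).
  assert (Hm : INR (b - a) * alpha = IZR (kfloor b - kfloor a) + (kfrac b - kfrac a)).
  { rewrite minus_INR, minus_IZR by lia.
    pose proof (kfloor_add_kfrac a). pose proof (kfloor_add_kfrac b). lra. }
  exists (b - a)%nat, (kfloor b - kfloor a)%Z.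
  destruct (Rlt_le_dec (kfrac a) (kfrac b)).
  - exists (kfrac b - kfrac a). split; [lia|]. split; [lra|]. left. lra.
  - exists (kfrac a - kfrac b). split; [lia|]. split; [lra|]. right. lra.
Qed.

Lemma orbit_dense c x y : x < y ->
  exists (i : nat) (z : Z), x < c - INR i * alpha + IZR z < y.
Proof.
  intros Hxy. destruct (small_multiple (y - x)) as [m [z [eta [Hm [He [E|E]]]]]]; [lra| |].
  - destruct (shift_hits_interval c x y eta) as [i [z' H]]; [lra|].
    exists (i * m)%nat, (z' + Z.of_nat i * z)%Z.
    rewrite mult_INR, plus_IZR, mult_IZR, <- INR_IZR_INZ, Rmult_assoc, E. lra.
  - destruct (shift_hits_interval (- c) (- y) (- x) eta) as [i [z' H]]; [lra|].
    exists (i * m)%nat, (- z' + Z.of_nat i * z)%Z.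
    rewrite mult_INR, plus_IZR, mult_IZR, opp_IZR, <- INR_IZR_INZ, Rmult_assoc, E. lra.
Qed.

End Irrational.

Lemma list_choice (l : list nat) (P : nat -> nat -> Prop) :
  (forall k, In k l -> exists i, P k i) -> exists f, forall k, In k l -> P k (f k).
Proof.
  induction l as [|a l IH]; intros H.
  - exists (fun _ => 0%nat). intros k [].
  - destruct (H a (or_introl eq_refl)) as [i0 Hi0].
    destruct IH as [f Hf]; [intros k Hk; apply H; right; exact Hk|].
    exists (fun x => if Nat.eq_dec x a then i0 else f x). intros k Hk.
    destruct (Nat.eq_dec k a) as [->|Hne]; [exact Hi0|].
    destruct Hk as [<-|Hk]; [congruence | exact (Hf k Hk)].
Qed.

Lemma list_argmin (l : list nat) (P : nat -> Prop) (g : nat -> R) :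
  (exists j, In j l /\ P j) ->
  exists j0, In j0 l /\ P j0 /\ forall j, In j l -> P j -> g j0 <= g j.
Proof.
  induction l as [|a l IH]; intros [j [Hj Pj]]; [destruct Hj|].
  destruct (classic (exists j, In j l /\ P j)) as [Ex|Nex].
  - destruct (IH Ex) as [j0 [I0 [P0 M0]]].
    destruct (classic (P a /\ g a <= g j0)) as [[Pa Le]|Na].
    + exists a. split; [left; reflexivity|]. split; [exact Pa|].
      intros j' [<-|I'] P'; [lra|]. specialize (M0 j' I' P'). lra.
    + exists j0. split; [right; exact I0|]. split; [exact P0|].
      intros j' [<-|I'] P'; [|exact (M0 j' I' P')].
      apply Rnot_lt_le. intros Lt. apply Na. split; [exact P'|lra].
  - assert (a = j) as <-.
    { destruct Hj as [E|Hj]; [exact E|]. exfalso. apply Nex. exists j. split; assumption. }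
    exists a. split; [left; reflexivity|]. split; [exact Pj|].
    intros j' [<-|I'] P'; [lra|]. exfalso. apply Nex. exists j'. split; assumption.
Qed.

Lemma list_gap_below (l : list nat) (g : nat -> R) c : 0 < c ->
  exists eps, 0 < eps <= c /\ forall j, In j l -> g j < c -> g j <= c - eps.
Proof.
  intros Hc. induction l as [|a l IH].
  - exists c. split; [lra|]. intros j [].
  - destruct IH as [e [He H]]. destruct (Rlt_le_dec (g a) c).
    + exists (Rmin e (c - g a)).
      pose proof (Rmin_l e (c - g a)). pose proof (Rmin_r e (c - g a)).
      split; [split; [apply Rmin_glb_lt|]; lra|].
      intros j [<-|Hj] Hl; [lra|]. specialize (H j Hj Hl). lra.
    + exists e. split; [exact He|]. intros j [<-|Hj] Hl; [lra | exact (H j Hj Hl)].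
Qed.

Definition bcount (u : word) (i m : nat) : nat := occ true (factor_at u i m).

Lemma factor_at_length u i m : length (factor_at u i m) = m.
Proof. unfold factor_at. rewrite length_map, length_seq. reflexivity. Qed.

Lemma nth_factor_at u i n x : (x < n)%nat -> nth x (factor_at u i n) false = u (i + x)%nat.
Proof.
  intros Hx. unfold factor_at.
  rewrite nth_indep with (d' := u (i + 0)%nat) by (rewrite length_map, length_seq; exact Hx).
  rewrite (map_nth (fun j => u (i + j)%nat)), seq_nth by exact Hx. reflexivity.
Qed.

Lemma occ_false_add_true w : (occ false w + occ true w)%nat = length w.
Proof. induction w as [|[] w IH]; unfold occ in *; simpl; lia. Qed.

Lemma bcount_S u i m : bcount u i (S m) = (bcount u i m + Nat.b2n (u (i + m)%nat))%nat.
Proof.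
  unfold bcount, occ, factor_at. rewrite seq_S, map_app, count_occ_app. simpl.
  destruct (u (i + m)%nat); reflexivity.
Qed.

Lemma bcount_add u i m k : bcount u i (m + k) = (bcount u i m + bcount u (i + m) k)%nat.
Proof.
  induction k as [|k IH].
  - change (bcount u (i + m) 0) with 0%nat. rewrite Nat.add_0_r. lia.
  - rewrite Nat.add_succ_r, !bcount_S, IH, Nat.add_assoc. lia.
Qed.

Lemma bcount_mul_le u m (c : Z) : (forall j, Z.of_nat (bcount u j m) <= c)%Z ->
  forall K, (Z.of_nat (bcount u 0 (K * m)) <= Z.of_nat K * c)%Z.
Proof.
  intros Hc K. induction K as [|K IH]; [simpl; lia|].
  rewrite Nat.mul_succ_l, bcount_add. specialize (Hc (0 + K * m)%nat). lia.
Qed.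

Lemma bcount_mul_ge u m (c : Z) : (forall j, c <= Z.of_nat (bcount u j m))%Z ->
  forall K, (Z.of_nat K * c <= Z.of_nat (bcount u 0 (K * m)))%Z.
Proof.
  intros Hc K. induction K as [|K IH]; [simpl; lia|].
  rewrite Nat.mul_succ_l, bcount_add. specialize (Hc (0 + K * m)%nat). lia.
Qed.

Section Balanced.

Variables (alpha : R) (u : word).
Hypothesis Hirr : irrational alpha.
Hypothesis Hbal : balanced u.
Hypothesis Hfreq : freq_b u alpha.

Lemma bcount_balanced i j m :
  (Z.abs (Z.of_nat (bcount u i m) - Z.of_nat (bcount u j m)) <= 1)%Z.
Proof.
  apply Hbal; [exists i | exists j | ]; rewrite !factor_at_length; reflexivity.
Qed.

Lemma freq_along_multiples eps m : 0 < eps -> (1 <= m)%nat ->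
  exists K, (1 <= K)%nat /\ Rabs (INR (bcount u 0 (K * m)) / INR (K * m) - alpha) < eps.
Proof.
  intros He Hm. destruct (Hfreq eps He) as [N HN].
  exists (S N). split; [lia|].
  specialize (HN (S N * m - 1)%nat). unfold R_dist in HN.
  replace (S (S N * m - 1)) with (S N * m)%nat in HN by lia.
  apply HN. destruct m; [lia|]. simpl. lia.
Qed.

Lemma mul_alpha_le_of_bcount_le m (c : Z) : (1 <= m)%nat ->
  (forall j, Z.of_nat (bcount u j m) <= c)%Z -> INR m * alpha <= IZR c.
Proof.
  intros Hm Hc. apply Rnot_lt_le. intros Hlt.
  assert (Hmpos : 0 < INR m) by (apply lt_0_INR; lia).
  destruct (freq_along_multiples (alpha - IZR c / INR m) m) as [K [HK1 HK2]]; [|exact Hm|].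
  { apply Rlt_0_minus, (Rmult_lt_reg_r (INR m)); [exact Hmpos|].
    field_simplify; lra. }
  assert (HK : INR (bcount u 0 (K * m)) <= INR K * IZR c).
  { pose proof (bcount_mul_le u m c Hc K) as H. apply IZR_le in H.
    rewrite mult_IZR, <- !INR_IZR_INZ in H. exact H. }
  assert (HKpos : 0 < INR K) by (apply lt_0_INR; lia).
  assert (INR (bcount u 0 (K * m)) / INR (K * m) <= IZR c / INR m).
  { rewrite mult_INR. apply (Rmult_le_reg_r (INR K * INR m)); [nra|].
    field_simplify; nra. }
  apply Rabs_def2 in HK2. lra.
Qed.

Lemma mul_alpha_ge_of_bcount_ge m (c : Z) : (1 <= m)%nat ->
  (forall j, c <= Z.of_nat (bcount u j m))%Z -> IZR c <= INR m * alpha.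
Proof.
  intros Hm Hc. apply Rnot_lt_le. intros Hlt.
  assert (Hmpos : 0 < INR m) by (apply lt_0_INR; lia).
  destruct (freq_along_multiples (IZR c / INR m - alpha) m) as [K [HK1 HK2]]; [|exact Hm|].
  { apply Rlt_0_minus, (Rmult_lt_reg_r (INR m)); [exact Hmpos|].
    field_simplify; lra. }
  assert (HK : INR K * IZR c <= INR (bcount u 0 (K * m))).
  { pose proof (bcount_mul_ge u m c Hc K) as H. apply IZR_le in H.
    rewrite mult_IZR, <- !INR_IZR_INZ in H. exact H. }
  assert (HKpos : 0 < INR K) by (apply lt_0_INR; lia).
  assert (IZR c / INR m <= INR (bcount u 0 (K * m)) / INR (K * m)).
  { rewrite mult_INR. apply (Rmult_le_reg_r (INR K * INR m)); [nra|].
    field_simplify; nra. }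
  apply Rabs_def2 in HK2. lra.
Qed.

(* Balance spreads a deviation at one position to all positions, contradicting the frequency. *)
Lemma bcount_floor_or_succ i m : (1 <= m)%nat ->
  Z.of_nat (bcount u i m) = kfloor alpha m \/ Z.of_nat (bcount u i m) = (kfloor alpha m + 1)%Z.
Proof.
  intros Hm. pose proof (kfloor_strict alpha Hirr m Hm) as Hs.
  assert (Hlow : (kfloor alpha m <= Z.of_nat (bcount u i m))%Z).
  { apply Z.nlt_ge. intros Hlt.
    assert (INR m * alpha <= IZR (kfloor alpha m)); [|lra].
    apply mul_alpha_le_of_bcount_le; [exact Hm|].
    intro j. pose proof (bcount_balanced i j m). lia. }
  assert (Hup : (Z.of_nat (bcount u i m) <= kfloor alpha m + 1)%Z).
  { apply Z.nlt_ge. intros Hlt.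
    assert (IZR (kfloor alpha m + 1) <= INR m * alpha); [|rewrite plus_IZR in *; lra].
    apply mul_alpha_ge_of_bcount_ge; [exact Hm|].
    intro j. pose proof (bcount_balanced i j m). lia. }
  lia.
Qed.


Definition discrepancy (i : nat) : R := INR (bcount u 0 i) - INR i * alpha.

Definition heavy (i k : nat) : Prop := Z.of_nat (bcount u i k) = (kfloor alpha k + 1)%Z.

Lemma discrepancy_step i k : (1 <= k)%nat ->
  (heavy i k /\ discrepancy (i + k) - discrepancy i = 1 - kfrac alpha k) \/
  (~ heavy i k /\ discrepancy (i + k) - discrepancy i = - kfrac alpha k).
Proof.
  intros Hk.
  assert (Hshift : discrepancy (i + k) - discrepancy i = INR (bcount u i k) - INR k * alpha).
  { unfold discrepancy. rewrite bcount_add, !plus_INR. simpl. lra. }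
  rewrite Hshift, (kfloor_add_kfrac alpha k), INR_IZR_INZ. unfold heavy.
  destruct (bcount_floor_or_succ i k Hk) as [E|E]; rewrite E.
  - right. split; [lia | lra].
  - left. split; [reflexivity|]. rewrite plus_IZR. lra.
Qed.

Lemma discrepancy_close a b : Rabs (discrepancy a - discrepancy b) < 1.
Proof.
  assert (Hstep : forall i m, Rabs (discrepancy (i + m) - discrepancy i) < 1).
  { intros i [|m].
    - rewrite Nat.add_0_r, Rminus_diag, Rabs_R0. lra.
    - pose proof (kfrac_pos alpha Hirr (S m) ltac:(lia)). pose proof (kfrac_range alpha (S m)).
      destruct (discrepancy_step i (S m)) as [[_ E]|[_ E]]; [lia| |];
        rewrite E; apply Rabs_def1; lra. }
  destruct (Nat.le_ge_cases a b) as [H|H].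
  - replace b with (a + (b - a))%nat by lia. rewrite Rabs_minus_sym. apply Hstep.
  - replace a with (b + (a - b))%nat by lia. apply Hstep.
Qed.

Lemma discrepancy_window : exists G, forall j, G <= discrepancy j <= G + 1.
Proof.
  set (E := fun x => exists j, x = - discrepancy j).
  assert (Hd0 : discrepancy 0 = 0) by (unfold discrepancy; simpl; lra).
  destruct (completeness E) as [M [HM1 HM2]].
  - exists 1. intros x [j ->]. pose proof (discrepancy_close j 0) as H.
    rewrite Hd0 in H. apply Rabs_def2 in H. lra.
  - exists (- discrepancy 0), 0%nat. reflexivity.
  - exists (- M). intro j. split.
    + assert (E (- discrepancy j)) as Hj by (exists j; reflexivity). apply HM1 in Hj. lra.
    + assert (M <= 1 - discrepancy j); [|lra]. apply HM2. intros x [j' ->].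
      pose proof (discrepancy_close j j') as H. apply Rabs_def2 in H. lra.
Qed.

Lemma kfrac_lt_of_heavy_light i k k' : (1 <= k)%nat -> (1 <= k')%nat ->
  heavy i k -> ~ heavy i k' -> kfrac alpha k' < kfrac alpha k.
Proof.
  intros Hk Hk' Hh Hl.
  destruct (discrepancy_step i k Hk) as [[_ E1]|[N _]]; [|contradiction].
  destruct (discrepancy_step i k' Hk') as [[N _]|[_ E2]]; [contradiction|].
  pose proof (discrepancy_close (i + k) (i + k')) as H. apply Rabs_def2 in H. lra.
Qed.

Lemma heavy_iff_of_factor_eq n i j : factor_at u i n = factor_at u j n ->
  forall k, (k <= n)%nat -> (heavy i k <-> heavy j k).
Proof.
  intros E.
  assert (Hb : forall k, (k <= n)%nat -> bcount u i k = bcount u j k).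
  { induction k as [|k IH]; intros Hk; [reflexivity|].
    rewrite !bcount_S, IH by lia.
    rewrite <- (nth_factor_at u i n k), <- (nth_factor_at u j n k), E by lia. reflexivity. }
  intros k Hk. unfold heavy. rewrite Hb by exact Hk. reflexivity.
Qed.

(* The heavy lengths determine the prefix counts, hence the letters. *)
Lemma factor_eq_of_heavy_iff n i j :
  (forall k, (1 <= k <= n)%nat -> (heavy i k <-> heavy j k)) ->
  factor_at u i n = factor_at u j n.
Proof.
  intros Hij.
  assert (Hb : forall k, (k <= n)%nat -> bcount u i k = bcount u j k).
  { intros [|k] Hk; [reflexivity|].
    specialize (Hij (S k) ltac:(lia)) as [Hij1 Hij2]. unfold heavy in Hij1, Hij2.
    apply Nat2Z.inj.
    destruct (bcount_floor_or_succ i (S k) ltac:(lia)) as [E1|E1];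
    destruct (bcount_floor_or_succ j (S k) ltac:(lia)) as [E2|E2]; lia. }
  unfold factor_at. apply map_ext_in. intros x Hx. apply in_seq in Hx.
  pose proof (Hb (S x) ltac:(lia)) as HS. rewrite !bcount_S, (Hb x) in HS by lia.
  destruct (u (i + x)%nat), (u (j + x)%nat); simpl in HS; lia.
Qed.

Section Window.

Variable G : R.
Hypothesis HG : forall j, G <= discrepancy j <= G + 1.

Lemma heavy_of_lt_kfrac i k : (1 <= k)%nat -> discrepancy i - G < kfrac alpha k -> heavy i k.
Proof.
  intros Hk Hl. destruct (discrepancy_step i k Hk) as [[H _]|[_ E]]; [exact H|].
  specialize (HG (i + k)%nat). lra.
Qed.

Lemma light_of_gt_kfrac i k : (1 <= k)%nat -> kfrac alpha k < discrepancy i - G -> ~ heavy i k.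
Proof.
  intros Hk Hl. destruct (discrepancy_step i k Hk) as [[_ E]|[H _]]; [|exact H].
  specialize (HG (i + k)%nat). lra.
Qed.

End Window.

Definition threshold_at (n i k0 : nat) : Prop :=
  forall k, (1 <= k <= n)%nat -> (heavy i k <-> kfrac alpha k0 <= kfrac alpha k).

(* Choose i with discrepancy i - G just below kfrac alpha k0, by density of the orbit of alpha. *)
Lemma threshold_at_realized n k0 : (1 <= k0)%nat -> exists i, threshold_at n i k0.
Proof.
  intros Hk0. destruct discrepancy_window as [G HG].
  pose proof (kfrac_pos alpha Hirr k0 Hk0) as Hpos.
  destruct (list_gap_below (seq 1 n) (kfrac alpha) (kfrac alpha k0) Hpos) as [e [He Hgap]].
  destruct (orbit_dense alpha Hirr (- G) (kfrac alpha k0 - e) (kfrac alpha k0)) as [i [z Hi]];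
    [lra|].
  assert (Hd : discrepancy i - G = - G - INR i * alpha + IZR z).
  { assert (Z.of_nat (bcount u 0 i) = z) as <-; [|rewrite <- INR_IZR_INZ; unfold discrepancy; lra].
    apply Zminus_eq, IZR_between_m1_1. rewrite minus_IZR, <- INR_IZR_INZ.
    specialize (HG i). unfold discrepancy in HG. pose proof (kfrac_range alpha k0). lra. }
  exists i. intros k Hk. split.
  - intros Hh. apply Rnot_lt_le. intros Hlt.
    specialize (Hgap k ltac:(apply in_seq; lia) Hlt).
    apply (light_of_gt_kfrac G HG i k); [lia | lra | exact Hh].
  - intros Hle. apply (heavy_of_lt_kfrac G HG i k); [lia | lra].
Qed.

Lemma threshold_at_of_heavy n i : (1 <= n)%nat -> heavy i n ->
  exists k0, (1 <= k0 <= n)%nat /\ kfrac alpha k0 <= kfrac alpha n /\ threshold_at n i k0.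
Proof.
  intros Hn Hh.
  destruct (list_argmin (seq 1 n) (heavy i) (kfrac alpha)) as [k0 [Ik0 [Hk0 Hmin]]].
  { exists n. split; [apply in_seq; lia | exact Hh]. }
  apply in_seq in Ik0. exists k0. split; [lia|]. split.
  { apply Hmin; [apply in_seq; lia | exact Hh]. }
  intros k Hk. split.
  - intros Hhk. apply Hmin; [apply in_seq; lia | exact Hhk].
  - intros Hle. apply NNPP. intros Hl.
    pose proof (kfrac_lt_of_heavy_light i k0 k ltac:(lia) ltac:(lia) Hk0 Hl). lra.
Qed.

Lemma threshold_at_factor_eq n i j k0 : threshold_at n i k0 -> threshold_at n j k0 ->
  factor_at u i n = factor_at u j n.
Proof.
  intros Hi Hj. apply factor_eq_of_heavy_iff. intros k Hk.
  rewrite (Hi k Hk), (Hj k Hk). reflexivity.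
Qed.

Lemma threshold_at_inj n i j a b : (1 <= a <= n)%nat -> (1 <= b <= n)%nat ->
  threshold_at n i a -> threshold_at n j b -> factor_at u i n = factor_at u j n -> a = b.
Proof.
  intros Ha Hb Hi Hj E. apply (kfrac_inj alpha Hirr).
  pose proof (heavy_iff_of_factor_eq n i j E) as Hij.
  apply Rle_antisym.
  - apply Hi; [exact Hb|]. apply Hij; [lia|]. apply Hj; [exact Hb | lra].
  - apply Hj; [exact Ha|]. apply Hij; [lia|]. apply Hi; [exact Ha | lra].
Qed.

End Balanced.

Lemma P_set_iff_heavy alpha u n w : irrational alpha -> (1 <= n)%nat ->
  P_set u alpha n w <-> exists i, w = factor_at u i n /\ heavy alpha u i n.
Proof.
  intros Hirr Hn. unfold P_set, heavy, bcount.
  rewrite (Zceil_mul_irrational alpha Hirr n Hn), (Zfloor_compl_mul_irrational alpha Hirr n Hn).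
  split.
  - intros [[i Ei] [Hl [_ Ht]]]. rewrite Hl in Ei. exists i. rewrite <- Ei. split; trivial.
  - intros [i [-> Ht]]. pose proof (occ_false_add_true (factor_at u i n)) as Hsum.
    rewrite factor_at_length in Hsum.
    split; [exists i; rewrite factor_at_length; reflexivity|].
    split; [apply factor_at_length|]. split; [lia | exact Ht].
Qed.

Lemma In_rhs_filter alpha n k :
  In k (filter (fun k => if Rle_dec (frac (INR k * alpha)) (frac (INR n * alpha))
                         then true else false) (seq 1 n)) <->
  (1 <= k <= n)%nat /\ kfrac alpha k <= kfrac alpha n.
Proof.
  rewrite filter_In, in_seq. unfold kfrac.
  destruct (Rle_dec (frac (INR k * alpha)) (frac (INR n * alpha))); intuition (lia || discriminate).
Qed.

Theorem lemma2 (alpha : R) (Ha : 0 < alpha < 1) (Hirr : irrational alpha)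
  (u : word) (Hu : sturmian u) (Hf : freq_b u alpha) :
  forall n : nat, (1 <= n)%nat -> card_is (P_set u alpha n) (rhs_count alpha n).
Proof.
  intros n Hn. destruct Hu as [Hbal _]. unfold rhs_count.
  set (ks := filter _ (seq 1 n)).
  assert (Hks : forall k, In k ks <-> (1 <= k <= n)%nat /\ kfrac alpha k <= kfrac alpha n)
    by apply In_rhs_filter.
  destruct (list_choice (seq 1 n) (fun k i => threshold_at alpha u n i k)) as [f Hth].
  { intros k Hk. apply in_seq in Hk. apply threshold_at_realized; trivial. lia. }
  assert (Hth' : forall k, (1 <= k <= n)%nat -> threshold_at alpha u n (f k) k)
    by (intros k Hk; apply Hth, in_seq; lia).
  exists (map (fun k => factor_at u (f k) n) ks). split; [|split].
  - apply NoDup_map_NoDup_ForallPairs; [|apply NoDup_filter, seq_NoDup].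
    intros a b Ia Ib E. apply Hks in Ia, Ib.
    apply (threshold_at_inj alpha u Hirr n (f a) (f b)); try apply Hth'; tauto.
  - intro w. rewrite in_map_iff, (P_set_iff_heavy alpha u n w Hirr Hn). split.
    + intros [k [<- Ik]]. apply Hks in Ik as [Ik Hle].
      exists (f k). split; [reflexivity|]. apply (Hth' k Ik); [lia | exact Hle].
    + intros [i [-> Hh]].
      destruct (threshold_at_of_heavy alpha u Hirr Hbal Hf n i Hn Hh) as [k [Hk [Hle Hi]]].
      exists k. split; [|apply Hks; tauto].
      exact (threshold_at_factor_eq alpha u Hirr Hbal Hf n (f k) i k (Hth' k Hk) Hi).
  - rewrite length_map. reflexivity.
Qed.
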